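(* Fix $\eta>0$, $\lambda\in\mathbb{R}^{2md}$, $e\in E$, $i\in e$, and let $\lambda'$ be obtained from $\lambda$ by replacing only the block $\lambda_{e,i}$ with $\lambda'_{e,i}(x)=\lambda_{e,i}(x)+\frac{1}{2\eta}\log\frac{S^\lambda_{e,i}(x)}{\mu^\lambda_i(x)}$ ($x\in\chi$). Then $$L(\lambda)-L(\lambda')\ \ge\ \frac{1}{4\eta}\|\nu^\lambda_{e,i}\|_1^2.$$
   Context: Let $G=(V,E)$ be a finite undirected graph with $n=|V|$, $m=|E|$, every vertex incident to at least one edge; $N_i=\{e\in E:i\in e\}$. $\chi$ is a finite label set with $d=|\chi|\ge2$. Costs $C_i\in\mathbb{R}^\chi$, $C_e\in\mathbb{R}^{\chi^2}$; for $e=\{i,j\}$, $x_e=(x_i,x_j)$ and $(x_e)_i=x_i$. Dual variables $\lambda=(\lambda_{e,i}(x))_{e\in E,i\in e,x\in\chi}\in\mathbb{R}^{2md}$ and $$L(\lambda)=\frac1\eta\sum_{i\in V}\log\sum_{x\in\chi}\exp\Big(-\eta C_i(x)+\eta\sum_{e\in N_i}\lambda_{e,i}(x)\Big)+\frac1\eta\sum_{e\in E}\log\sum_{x_e\in\chi^2}\exp\Big(-\eta C_e(x_e)-\eta\sum_{i\in e}\lambda_{e,i}((x_e)_i)\Big).$$ $\mu^\lambda_i(x)\propto\exp(-\eta C_i(x)+\eta\sum_{e\in N_i}\lambda_{e,i}(x))$, $\mu^\lambda_e(x_e)\propto\exp(-\eta C_e(x_e)-\eta\sum_{i\in e}\lambda_{e,i}((x_e)_i))$,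 each normalized to sum to $1$; $S^\lambda_{e,i}(x)=\sum_{x_e:(x_e)_i=x}\mu^\lambda_e(x_e)$; the slack vector is $\nu^\lambda_{e,i}=S^\lambda_{e,i}-\mu^\lambda_i\in\mathbb{R}^\chi$ (so $\partial L/\partial\lambda_{e,i}(x)=-\nu^\lambda_{e,i}(x)$). *)

From mathcomp Require Import all_boot all_order all_algebra.
From mathcomp Require Import reals.
From mathcomp Require Import sequences exp.
Set Implicit Arguments. Unset Strict Implicit. Unset Printing Implicit Defensive.
Import Order.TTheory GRing.Theory Num.Theory.
Local Open Scope ring_scope.

(* Graph: vertices V, edges E; each edge e = {i,j} is given with a fixed
   orientation ends e = (i, j) so that x_e = (x_i, x_j) and C_e : chi^2 -> R
   make sense.  endpoint e false = i, endpoint e true = j. *)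
Section Defs.
Variables (R : realType) (V E X : finType) (ends : E -> V * V).

Definition endpoint (e : E) (b : bool) : V := if b then (ends e).2 else (ends e).1.

Definition simple_graph_cover : Prop :=
  [/\ (forall e, (ends e).1 != (ends e).2),
      (forall e f, [set (ends e).1; (ends e).2] = [set (ends f).1; (ends f).2] -> e = f)
    & (forall i, exists e b, endpoint e b = i)].

(* dual variables lambda_{e,i}(x), with i = endpoint e b : a vector in R^{2md} *)
Definition dual := E -> bool -> X -> R.

Variables (eta : R) (Cv : V -> X -> R) (Ce : E -> X -> X -> R).

Definition vpot (lam : dual) (i : V) (x : X) : R :=
  - eta * Cv i x + eta * \sum_(p : E * bool | endpoint p.1 p.2 == i) lam p.1 p.2 x.

Definition epot (lam : dual) (e : E) (xe : X * X) : R :=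
  - eta * Ce e xe.1 xe.2 - eta * (lam e false xe.1 + lam e true xe.2).

Definition Lfun (lam : dual) : R :=
  eta^-1 * \sum_(i : V) ln (\sum_(x : X) expR (vpot lam i x))
  + eta^-1 * \sum_(e : E) ln (\sum_(xe : X * X) expR (epot lam e xe)).

Definition mu_v (lam : dual) (i : V) (x : X) : R :=
  expR (vpot lam i x) / \sum_(y : X) expR (vpot lam i y).

Definition mu_e (lam : dual) (e : E) (xe : X * X) : R :=
  expR (epot lam e xe) / \sum_(ye : X * X) expR (epot lam e ye).

Definition comp (b : bool) (xe : X * X) : X := if b then xe.2 else xe.1.

Definition Smarg (lam : dual) (e : E) (b : bool) (x : X) : R :=
  \sum_(xe : X * X | comp b xe == x) mu_e lam e xe.

Definition slack (lam : dual) (e : E) (b : bool) (x : X) : R :=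
  Smarg lam e b x - mu_v lam (endpoint e b) x.

Definition update (lam : dual) (e : E) (b : bool) : dual :=
  fun e' b' x =>
    if (e' == e) && (b' == b) then
      lam e b x + (2 * eta)^-1 * ln (Smarg lam e b x / mu_v lam (endpoint e b) x)
    else lam e' b' x.

Definition norm1 (v : X -> R) : R := \sum_(x : X) `|v x|.

End Defs.

From Pilot Require Import Defs.
From mathcomp Require Import all_boot all_order all_algebra.
From mathcomp Require Import reals sequences exp.
From mathcomp Require Import ring lra.
Set Implicit Arguments. Unset Strict Implicit.
Import Order.TTheory GRing.Theory Num.Theory.
Local Open Scope ring_scope.

(* Write mu = mu_i, S = S_{e,i} and w(x) = sqrt(S(x)/mu(x)), the
   factor by which the block update multiplies the Gibbs weight of x at the
   vertex i; it divides the weight of every x_e with (x_e)_i = x at the edge e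
   by the same factor, and leaves all other factors of L unchanged.  Hence both
   affected log-partition functions grow by ln BC, where BC = sum_x mu(x) w(x)
   = sum_x sqrt(mu(x) S(x)) is the Bhattacharyya coefficient of mu and S, and
   L(lam) - L(lam') = -(2/eta) ln BC.  On the other side,
   ||S - mu||_1 = sum mu |w - 1| (w + 1) <= 2 sqrt(1 - BC^2) by a weighted
   Cauchy-Schwarz inequality, and 1 - BC^2 <= -ln (BC^2) = -2 ln BC. *)

Lemma sumr_gt0_of_pos (R : realType) (T : finType) (F : T -> R) (t : T) :
  (forall x, 0 < F x) -> 0 < \sum_x F x.
Proof.
move=> F_gt0; rewrite (bigD1 t) //=.
have : 0 <= \sum_(x | x != t) F x by apply: sumr_ge0 => x _; apply: ltW.
by have := F_gt0 t; lra.
Qed.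

Lemma one_sub_le_oppr_ln (R : realType) (t : R) : 0 < t -> 1 - t <= - ln t.
Proof. by move=> t_gt0; have := expR_ge1Dx (ln t); rewrite lnK ?posrE //; lra. Qed.

Lemma weighted_cauchy_schwarz (R : realType) (T : finType) (w u v : T -> R) :
  (forall x, 0 <= w x) -> 0 < \sum_x w x * v x ^+ 2 ->
  (\sum_x w x * u x * v x) ^+ 2 <=
  (\sum_x w x * u x ^+ 2) * (\sum_x w x * v x ^+ 2).
Proof.
move=> w_ge0; set A := \sum_x w x * u x ^+ 2; set B := \sum_x w x * v x ^+ 2.
set C := \sum_x w x * u x * v x => B_gt0.
have B_neq0 : B != 0 := lt0r_neq0 B_gt0.
(* expand 0 <= sum_x w x (u x - t v x)^2 at the optimal t = C / B *)
have expand : \sum_x w x * (u x - C / B * v x) ^+ 2 = A - C ^+ 2 / B.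
  transitivity (A - 2 * (C / B) * C + (C / B) ^+ 2 * B); last by field.
  rewrite /A /B /C !mulr_sumr -sumrB -big_split /=.
  by apply: eq_bigr => x _; ring.
have : 0 <= \sum_x w x * (u x - C / B * v x) ^+ 2.
  by apply: sumr_ge0 => x _; rewrite mulr_ge0 ?sqr_ge0.
by rewrite expand subr_ge0 ler_pdivrMr.
Qed.

Lemma l1_le_bhattacharyya (R : realType) (T : finType) (p w : T -> R) :
  (forall x, 0 <= p x) -> (forall x, 0 <= w x) ->
  \sum_x p x = 1 -> \sum_x p x * w x ^+ 2 = 1 ->
  (\sum_x `|p x * w x ^+ 2 - p x|) ^+ 2 <= 4 * (1 - (\sum_x p x * w x) ^+ 2).
Proof.
move=> p_ge0 w_ge0 sum_p sum_q; set BC := \sum_x p x * w x.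
have BC_ge0 : 0 <= BC by apply: sumr_ge0 => x _; rewrite mulr_ge0.
have sum_minus : \sum_x p x * `|w x - 1| ^+ 2 = 2 - 2 * BC.
  rewrite (eq_bigr (fun x => p x * w x ^+ 2 - 2 * (p x * w x) + p x)); last first.
    by move=> x _; rewrite real_normK ?num_real //; ring.
  by rewrite !big_split /= sumrN -mulr_sumr sum_p sum_q -/BC; ring.
have sum_plus : \sum_x p x * (w x + 1) ^+ 2 = 2 + 2 * BC.
  rewrite (eq_bigr (fun x => p x * w x ^+ 2 + 2 * (p x * w x) + p x)); last first.
    by move=> x _; ring.
  by rewrite !big_split /= -mulr_sumr sum_p sum_q -/BC; ring.
have -> : \sum_x `|p x * w x ^+ 2 - p x| = \sum_x p x * `|w x - 1| * (w x + 1).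
  apply: eq_bigr => x _.
  rewrite (_ : _ - _ = p x * (w x - 1) * (w x + 1)); last by ring.
  by rewrite !normrM (ger0_norm (p_ge0 x)) (@ger0_norm _ (w x + 1)) //; have := w_ge0 x; lra.
have sum_plus_gt0 : 0 < \sum_x p x * (w x + 1) ^+ 2 by rewrite sum_plus; lra.
have := weighted_cauchy_schwarz (fun x => `|w x - 1|) p_ge0 sum_plus_gt0.
move=> /= /le_trans; apply.
by rewrite sum_minus sum_plus; lra.
Qed.

Section GibbsDistribution.
Variables (R : realType) (T : finType) (t0 : T).

Definition gibbs (a : T -> R) (x : T) : R := expR (a x) / \sum_y expR (a y).

Lemma partition_gt0 (a : T -> R) : 0 < \sum_y expR (a y).
Proof. by apply: (sumr_gt0_of_pos t0) => y; apply: expR_gt0. Qed.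

Lemma gibbs_gt0 (a : T -> R) (x : T) : 0 < gibbs a x.
Proof. by rewrite divr_gt0 ?expR_gt0 ?partition_gt0. Qed.

Lemma gibbs_sum1 (a : T -> R) : \sum_x gibbs a x = 1.
Proof. by rewrite -mulr_suml divff // gt_eqF ?partition_gt0. Qed.

Lemma ln_partition_shift (a c : T -> R) :
  ln (\sum_x expR (a x + c x))
  = ln (\sum_x expR (a x)) + ln (\sum_x gibbs a x * expR (c x)).
Proof.
have Z_gt0 := partition_gt0 a.
rewrite -lnM ?posrE //; last first.
  by apply: (sumr_gt0_of_pos t0) => x; rewrite mulr_gt0 ?gibbs_gt0 ?expR_gt0.
congr ln; rewrite mulr_sumr; apply: eq_bigr => x _.
by rewrite /gibbs expRD; field; rewrite gt_eqF.
Qed.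

End GibbsDistribution.

Section BlockUpdate.
Variables (R : realType) (V E X : finType) (ends : E -> V * V).
Variables (Cv : V -> X -> R) (Ce : E -> X -> X -> R) (eta : R) (lam : dual R E X).
Variables (e : E) (b : bool) (x0 : X).
Hypothesis eta_gt0 : 0 < eta.

Let i := endpoint ends e b.
Let mu := mu_v ends eta Cv lam i.
Let S := Smarg eta Ce lam e b.
Let lam' := update ends eta Cv Ce lam e b.

Let incr (x : X) : R := (2 * eta)^-1 * ln (S x / mu x).

(* The factor sqrt (S x / mu x) applied to the Gibbs weight of x at vertex i. *)
Let reweight (x : X) : R := expR (eta * incr x).

Let BC : R := \sum_x mu x * reweight x.

Lemma mu_gt0 (x : X) : 0 < mu x.
Proof. exact: (gibbs_gt0 x0). Qed.

(* S x > 0, since the pair (x, x) contributes to it. *)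
Lemma Smarg_gt0 (x : X) : 0 < S x.
Proof.
rewrite /S /Smarg (bigD1 (x, x)) /=; last by case: (b).
have mue_gt0 xe : 0 < mu_e eta Ce lam e xe := gibbs_gt0 (x0, x0) _ xe.
apply: (lt_le_trans (mue_gt0 (x, x))); rewrite lerDl.
by apply: sumr_ge0 => y _; apply/ltW/mue_gt0.
Qed.

(* S is a probability vector: a marginal of the edge Gibbs distribution. *)
Lemma Smarg_sum1 : \sum_x S x = 1.
Proof.
by rewrite -[RHS](gibbs_sum1 (x0, x0) (epot eta Ce lam e)) (partition_big (Defs.comp b) predT).
Qed.

Lemma Smarg_reweight (x : X) : S x = mu x * reweight x ^+ 2.
Proof.
have [mu_x_gt0 S_x_gt0] := (mu_gt0 x, Smarg_gt0 x).
rewrite /reweight -expRM_natl.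
have -> : 2%:R * (eta * incr x) = ln (S x / mu x) by rewrite /incr; field; rewrite gt_eqF.
rewrite lnK; last by rewrite posrE divr_gt0.
by rewrite mulrCA divff ?mulr1 // gt_eqF.
Qed.

Lemma BC_gt0 : 0 < BC.
Proof. by apply: (sumr_gt0_of_pos x0) => x; rewrite mulr_gt0 ?mu_gt0 ?expR_gt0. Qed.

Lemma update_block (e' : E) (b' : bool) (x : X) :
  lam' e' b' x = lam e' b' x + (if (e' == e) && (b' == b) then incr x else 0).
Proof. by rewrite /lam' /update; case: ifP => [/andP[/eqP-> /eqP->]|]; rewrite ?addr0. Qed.

Lemma vpot_update (j : V) (x : X) :
  vpot ends eta Cv lam' j x
  = vpot ends eta Cv lam j x + (if j == i then eta * incr x else 0).
Proof.
rewrite /vpot; under eq_bigr => p _ do rewrite update_block.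
rewrite big_split /= -big_mkcondr /= mulrDr addrA; congr (_ + _).
case: eqP => [->|j_neq_i].
  rewrite (big_pred1 (e, b)) // => -[e' b'] /=; rewrite xpair_eqE.
  by case: (e' =P e) => [->|]; case: (b' =P b) => [->|]; rewrite /= ?eqxx ?andbF.
rewrite big_pred0 ?mulr0 // => -[e' b'] /=.
case: (e' =P e) => [->|]; case: (b' =P b) => [->|]; rewrite /= ?andbF // andbT.
by apply/negbTE/eqP => ij; apply: j_neq_i.
Qed.

Lemma epot_update (f : E) (xe : X * X) :
  epot eta Ce lam' f xe
  = epot eta Ce lam f xe + (if f == e then - (eta * incr (Defs.comp b xe)) else 0).
Proof.
rewrite /epot !update_block; case: (f =P e) => [->|_]; last by rewrite /= !addr0.
by rewrite /Defs.comp ?eqxx; case: b => /=; rewrite ?addr0; ring.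
Qed.

Lemma vertex_log_partition_update (j : V) :
  ln (\sum_x expR (vpot ends eta Cv lam' j x))
  = ln (\sum_x expR (vpot ends eta Cv lam j x)) + (if j == i then ln BC else 0).
Proof.
under eq_bigr => x _ do rewrite vpot_update.
rewrite (ln_partition_shift x0); case: (j =P i) => [-> //|_] /=.
by rewrite expR0 -mulr_suml mulr1 (gibbs_sum1 x0) ln1.
Qed.

(* The log-partition function at e grows by ln BC, since summing
   mu_e / reweight over the fibre (x_e)_i = x gives S x / reweight x = mu x *
   reweight x; the others are unchanged. *)
Lemma edge_log_partition_update (f : E) :
  ln (\sum_xe expR (epot eta Ce lam' f xe))
  = ln (\sum_xe expR (epot eta Ce lam f xe)) + (if f == e then ln BC else 0).
Proof.
under eq_bigr => xe _ do rewrite epot_update.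
rewrite (ln_partition_shift (x0, x0)); case: (f =P e) => [->|_] /=; last first.
  by rewrite expR0 -mulr_suml mulr1 (gibbs_sum1 (x0, x0)) ln1.
congr (_ + ln _); rewrite (partition_big (Defs.comp b) predT) //=.
apply: eq_bigr => x _; rewrite -[mu x * _](_ : S x / reweight x = _); last first.
  by rewrite Smarg_reweight; field; rewrite gt_eqF ?expR_gt0.
rewrite /S /Smarg mulr_suml; apply: eq_bigr => xe /eqP <-.
by rewrite expRN.
Qed.

Lemma Lfun_update :
  Lfun ends eta Cv Ce lam - Lfun ends eta Cv Ce lam' = eta^-1 * (- 2 * ln BC).
Proof.
rewrite /Lfun (eq_bigr _ (fun j _ => vertex_log_partition_update j)).
rewrite (eq_bigr _ (fun f _ => edge_log_partition_update f)).
rewrite !big_split /= -!big_mkcond !big_pred1_eq; ring.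
Qed.

Lemma slack_norm_bound :
  norm1 (slack ends eta Cv Ce lam e b) ^+ 2 <= - 8 * ln BC.
Proof.
have -> : norm1 (slack ends eta Cv Ce lam e b) = \sum_x `|mu x * reweight x ^+ 2 - mu x|.
  by apply: eq_bigr => x _; rewrite /slack -Smarg_reweight.
apply: le_trans (l1_le_bhattacharyya _ _ _ _) _.
- by move=> x; apply: ltW; apply: mu_gt0.
- by move=> x; apply: ltW; apply: expR_gt0.
- exact: (gibbs_sum1 x0).
- by rewrite -Smarg_sum1; apply: eq_bigr => x _; rewrite Smarg_reweight.
have := one_sub_le_oppr_ln (exprn_gt0 2 BC_gt0).
by rewrite lnXn ?BC_gt0 // -/BC; lra.
Qed.

End BlockUpdate.

Theorem lemma1 (R : realType) (V E X : finType) (ends : E -> V * V)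
  (Cv : V -> X -> R) (Ce : E -> X -> X -> R) (eta : R) (lam : dual R E X)
  (e : E) (b : bool) :
  simple_graph_cover ends -> (1 < #|X|)%N -> 0 < eta ->
  Lfun ends eta Cv Ce lam - Lfun ends eta Cv Ce (update ends eta Cv Ce lam e b)
    >= (4 * eta)^-1 * (norm1 (slack ends eta Cv Ce lam e b)) ^+ 2.
Proof.
move=> _ card_X eta_gt0.
have [x0 _] := card_gt0P (ltnW card_X).
rewrite (Lfun_update _ _ _ _ _ _ x0 eta_gt0) invfM [4^-1 * _]mulrC -mulrA.
apply: ler_wpM2l; first by rewrite invr_ge0 ltW.
by have := slack_norm_bound ends Cv Ce lam e b x0 eta_gt0; lra.
Qed.
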